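(* Let $n\ge1$. For an anticommutative pure basic sequence $\mathbf e$ of length $n$ in a signed group, let $s_+$ (resp. $s_-$) be the number of negative elements among $\{\mathbf e^{\mathbf p}:\mathbf p\in\{0,1\}^n\}$ when $\mathbf e$ is positive (resp. negative). Then: (1) $s_-=s_+$ if and only if $4\mid n$; in this case every pure anticommutative generator of length $n$ admits a replacement which is a pure anticommutative generator of the opposite signature. (2) $s_+=2^{n-1}-2^{n/2-1}\big(\cos\frac{n\pi}{4}+\sin\frac{n\pi}{4}\big)$ and $s_-=2^{n-1}-2^{n/2-1}\big(\cos\frac{n\pi}{4}-\sin\frac{n\pi}{4}\big)$.
   Context: A signed group is a group containing a central element $-1\neq1$ with $(-1)^2=1$ such that any two elements either commute or anticommute ($ef=-fe$) and each element $e$ has signature $e^2\in\{\pm1\}$ (positive if $e^2=1$, negative if $e^2=-1$); a sequence is pure if all its elements have the same signature (positive or negative). For $\mathbf p\in\{0,1\}^n$, $\mathbf e^{\mathbf p}=e_1^{p_1}\cdots e_n^{p_n}$. A sequence is basic if no $\mathbf e^{\mathbf p}$ with $\mathbf p\neq\mathbf0$ equals $\pm1$; a generator is a basic sequence, generating the group $\{\pm\mathbf e^{\mathbf p}\}$, and a replacement of a generator is another generator generating the same group. Anticommutative means any two distinct terms anticommute. *)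

From mathcomp Require Import all_boot.
From Stdlib Require Import Reals.

Set Implicit Arguments.
Unset Strict Implicit.
Unset Printing Implicit Defensive.

Section SignedGroup.
Variable G : groupType.

Definition gmul : G -> G -> G := @mul G.
Definition gone : G := @one G.

Record signed_group (m : G) : Prop := SignedGroup {
  sg_neq1 : m <> gone;
  sg_sq : gmul m m = gone;
  sg_central : forall x, gmul m x = gmul x m;
  sg_comm : forall x y, gmul x y = gmul y x \/ gmul x y = gmul m (gmul y x);
  sg_signature : forall x, gmul x x = gone \/ gmul x x = m
}.

Definition positive_elt (x : G) : Prop := gmul x x = gone.
Definition negative_elt (m x : G) : Prop := gmul x x = m.

Definition emon (n : nat) (e : 'I_n -> G) (p : {ffun 'I_n -> bool}) : G :=
  \big[gmul/gone]_(i < n) (if p i then e i else gone).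

Definition positive_seq (n : nat) (e : 'I_n -> G) : Prop :=
  forall i, positive_elt (e i).
Definition negative_seq (m : G) (n : nat) (e : 'I_n -> G) : Prop :=
  forall i, negative_elt m (e i).
Definition pure_seq (m : G) (n : nat) (e : 'I_n -> G) : Prop :=
  positive_seq e \/ negative_seq m e.

Definition anticommutative (m : G) (n : nat) (e : 'I_n -> G) : Prop :=
  forall i j : 'I_n, i != j -> gmul (e i) (e j) = gmul m (gmul (e j) (e i)).

Definition basic (m : G) (n : nat) (e : 'I_n -> G) : Prop :=
  forall p : {ffun 'I_n -> bool}, p != [ffun=> false] ->
    emon e p <> gone /\ emon e p <> m.

Definition generated (m : G) (n : nat) (e : 'I_n -> G) (x : G) : Prop :=
  exists p, x = emon e p \/ x = gmul m (emon e p).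

Definition same_generated (m : G) (n k : nat) (e : 'I_n -> G) (f : 'I_k -> G)
  : Prop := forall x, generated m e x <-> generated m f x.

Definition num_neg (m : G) (n : nat) (e : 'I_n -> G) : nat :=
  #|[set p : {ffun 'I_n -> bool} | gmul (emon e p) (emon e p) == m]|.

End SignedGroup.

From mathcomp Require Import all_boot zify.
From Stdlib Require Import Reals Lra.

Set Implicit Arguments.
Unset Strict Implicit.
Unset Printing Implicit Defensive.

(* Up to the sign m, monomials multiply by adding exponent vectors in F_2^n,
   since any two elements commute up to sign.  If moreover the e_i
   anticommute and e_i^2 = m^t, a monomial of weight k squares to
   m^(C(k,2) + t k), so s_+ and s_- are sums of binomial coefficients C(n,k)
   over two sets of residues of k mod 4.  These sums a_n, b_n satisfy
   a_(n+1) = a_n + b_n and b_(n+1) = b_n + 2^n - a_n, as do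
   2^(n-1) - Re(z_n) -+ Im(z_n) for z_n = (1+i)^n / 2, which gives (2); and
   s_- - s_+ = 2 Im(z_n) vanishes iff 4 | n.
   When 4 | n, E = e_1 ... e_n squares to 1 and anticommutes with every e_i,
   so f_i = E e_i is anticommutative with f_i^2 = m e_i^2.  Up to sign,
   f^p = e^(p + |p| 1), and p |-> p + |p| 1 is an involution of F_2^n as n is
   even, so f is a basic generator of the same group. *)

Definition binom_sum (P : pred nat) n := \sum_(k < n.+1) P k * 'C(n, k).

Section IndexSubsets.
Variable n : nat.
Local Notation U := (index_enum 'I_n).

Lemma size_index_enum_ord : size U = n.
Proof. by rewrite -[RHS]card_ord cardT enumT [index_enum _]unlock. Qed.

Lemma count_and_eq (q : pred 'I_n) j : count (fun i => q i && (j == i)) U = q j.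
Proof.
have -> : count (fun i => q i && (j == i)) U = count q (filter (pred1 j) U).
  by rewrite count_filter; apply: eq_count => i; rewrite /= eq_sym.
by rewrite filter_pred1_uniq ?index_enum_uniq ?mem_index_enum //= addn0.
Qed.

Lemma countD1 (q : pred 'I_n) j : count q U = q j + count (fun i => q i && (j != i)) U.
Proof.
rewrite -(count_and_eq q j) -size_filter -(count_predC (pred1 j)) !count_filter.
by congr (_ + _); apply: eq_count => i; rewrite /= eq_sym andbC.
Qed.

Lemma card_count_ffun (P : pred nat) :
  #|[set p : {ffun 'I_n -> bool} | P (count p U)]| = binom_sum P n.
Proof.
pose supp (p : {ffun 'I_n -> bool}) := [set i | p i].
pose ind (A : {set 'I_n}) := [ffun i => i \in A].
have suppK : cancel supp ind by move=> p; apply/ffunP => i; rewrite ffunE inE.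
have indK : cancel ind supp by move=> A; apply/setP => i; rewrite inE ffunE.
have card_supp p : #|supp p| = count p U by rewrite -sum1dep_card sum1_count.
have count_lt (p : {ffun 'I_n -> bool}) : count p U < n.+1.
  by rewrite ltnS -(card_supp p) -[X in _ <= X]card_ord max_card.
have card_count_eq k : #|[set p : {ffun 'I_n -> bool} | count p U == k]| = 'C(n, k).
  rewrite -(card_imset _ (can_inj suppK)) (can2_imset_pre _ suppK indK).
  rewrite -[n in 'C(n, _)]card_ord -card_draws; apply: eq_card => A.
  by rewrite !inE -card_supp indK.
rewrite -sum1dep_card /binom_sum.
pose weight (p : {ffun 'I_n -> bool}) : 'I_n.+1 := inord (count p U).
rewrite (partition_big weight P) => [|p]; last by rewrite inordK.
rewrite big_mkcond; apply: eq_bigr => k _; case Pk: (P k); last by [].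
rewrite mul1n -card_count_eq sum1dep_card; apply: eq_card => p; rewrite !inE.
apply/andP/eqP => [[_ /eqP <-] | count_p]; first by rewrite inordK.
by rewrite count_p Pk; split=> //; apply/eqP/val_inj; rewrite /= inordK.
Qed.

End IndexSubsets.

Lemma eq_binom_sum P Q n : P =1 Q -> binom_sum P n = binom_sum Q n.
Proof. by move=> PQ; apply: eq_bigr => k _; rewrite PQ. Qed.

Lemma binom_sumS P n : binom_sum P n.+1 = binom_sum P n + binom_sum (fun k => P k.+1) n.
Proof.
rewrite /binom_sum big_ord_recl [in RHS]big_ord_recl !bin0 -addnA; congr (_ + _).
under eq_bigr => k _ do rewrite lift0 binS mulnDr.
under [in RHS]eq_bigr => k _ do rewrite lift0.
rewrite big_split /=; congr (_ + _).
by rewrite big_ord_recr /= bin_small // muln0 addn0.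
Qed.

(* [expn 2 n], not [2 ^ n]: importing Reals rebinds [^] in nat_scope to Nat.pow. *)
Lemma binom_sum_predC P n : binom_sum P n + binom_sum (predC P) n = expn 2 n.
Proof.
rewrite /binom_sum -big_split -[2]/(1 + 1) expnDn; apply: eq_bigr => k _.
by rewrite !exp1n !muln1 /= -mulnDl; case: (P k); rewrite mul1n.
Qed.

Definition negative_weight t : pred nat := fun k => odd ('C(k, 2) + t * k).

Lemma negative_weight0S k : negative_weight 0 k.+1 = negative_weight 1 k.
Proof. by rewrite /negative_weight binS bin1 mul0n mul1n addn0. Qed.

Lemma negative_weight1S k : negative_weight 1 k.+1 = ~~ negative_weight 0 k.
Proof.
rewrite /negative_weight binS bin1 mul1n mul0n addn0 -addnA addnS addnn.
by rewrite oddD oddS odd_double addbT.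
Qed.

Lemma binom_sum_negative_weight0S n :
  binom_sum (negative_weight 0) n.+1
  = binom_sum (negative_weight 0) n + binom_sum (negative_weight 1) n.
Proof. by rewrite binom_sumS (eq_binom_sum _ negative_weight0S). Qed.

Lemma binom_sum_negative_weight1S n :
  binom_sum (negative_weight 1) n.+1 + binom_sum (negative_weight 0) n
  = binom_sum (negative_weight 1) n + expn 2 n.
Proof.
have := binom_sum_predC (negative_weight 0) n.
by rewrite binom_sumS (@eq_binom_sum _ (predC (negative_weight 0)) _ negative_weight1S); lia.
Qed.

Lemma bin2_even_of_dvd4 k : 4 %| k -> ~~ odd 'C(k, 2).
Proof.
case/dvdnP=> q ->; rewrite bin2 (_ : q * 4 * _ = (q * 2 * (q * 4).-1).*2).
  by rewrite doubleK !oddM andbF.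
by rewrite -mul2n; nia.
Qed.

Section SignedGroupTheory.
Local Open Scope group_scope.

Variables (G : groupType) (m : G).
Hypothesis sgm : signed_group m.

Lemma mulmm : m * m = 1. Proof. exact: sg_sq sgm. Qed.

Lemma commute_m x : commute m x. Proof. exact: (sg_central sgm x). Qed.

Lemma commute_expm k x : commute (m ^+ k) x.
Proof. exact/commute_sym/commuteX/commute_sym/commute_m. Qed.

Lemma expm_odd k : m ^+ k = if odd k then m else 1.
Proof.
elim: k => // k IH; rewrite expgS IH /=.
by case: (odd k); rewrite ?mulmm ?mulg1.
Qed.

Lemma expm_eqm k : (m ^+ k == m) = odd k.
Proof.
rewrite expm_odd; case: (odd k); first exact: eqxx.
by apply/eqP => m1; apply: (sg_neq1 sgm).
Qed.

Lemma expm_double k : m ^+ k * m ^+ k = 1.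
Proof. by rewrite -expgnDr addnn expm_odd odd_double. Qed.

Definition sign_eq x y := exists k, x = m ^+ k * y.
Local Notation "x =± y" := (sign_eq x y) (at level 70, no associativity).

Lemma sign_eq_refl x : x =± x. Proof. by exists 0; rewrite mul1g. Qed.

Lemma sign_eq_sym x y : x =± y -> y =± x.
Proof. by case=> k ->; exists k; rewrite mulgA expm_double mul1g. Qed.

Lemma sign_eq_trans y x z : x =± y -> y =± z -> x =± z.
Proof. by case=> k -> [l ->]; exists (k + l); rewrite expgnDr mulgA. Qed.

Lemma sign_eqMl z x y : x =± y -> z * x =± z * y.
Proof. by case=> k ->; exists k; rewrite !mulgA (commute_expm k z). Qed.

Lemma sign_eqMr z x y : x =± y -> x * z =± y * z.
Proof. by case=> k ->; exists k; rewrite mulgA. Qed.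

Lemma sign_eq_mulC x y : x * y =± y * x.
Proof.
by case: (sg_comm sgm x y); rewrite /gmul => ->; [apply: sign_eq_refl | exists 1%nat].
Qed.

Lemma sign_eq_sqr x : x * x =± 1.
Proof.
case: (sg_signature sgm x); rewrite /gmul /gone => ->; first exact: sign_eq_refl.
by exists 1%nat; rewrite mulg1.
Qed.

Lemma sign_eqP x y : x =± y <-> x = y \/ x = m * y.
Proof.
split; last by case=> ->; [apply: sign_eq_refl | exists 1%nat].
by case=> k ->; rewrite expm_odd; case: (odd k); [right | left; rewrite mul1g].
Qed.

Lemma sign_eq_neq1m x y : x =± y -> y <> 1 -> y <> m -> x <> 1 /\ x <> m.
Proof.
case/sign_eqP=> -> // y1 ym.
split=> [my1 | mym]; [apply: ym | apply: y1]; apply: (mulgI m).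
  by rewrite my1 mulmm.
by rewrite mym mulg1.
Qed.

Lemma generatedP k (f : 'I_k -> G) x : generated m f x <-> exists p, x =± emon f p.
Proof. by split=> [[p /sign_eqP] | [p /sign_eqP]]; exists p. Qed.

Lemma emonE k (f : 'I_k -> G) p : emon f p = \prod_(i <- index_enum 'I_k | p i) f i.
Proof. by rewrite big_mkcond. Qed.

Variables (n : nat) (e : 'I_n -> G).
Local Notation U := (index_enum 'I_n).

Lemma emon0 : emon e [ffun=> false] = 1.
Proof. by rewrite emonE big_pred0 // => i; rewrite ffunE. Qed.

Lemma mul_emon_flip a p : e a * emon e p =± emon e [ffun i => p i (+) (i == a)].
Proof.
rewrite !emonE; have := index_enum_uniq 'I_n.
case/splitPr: (mem_index_enum a) => U1 U2.
rewrite cat_uniq /= => /and3P [_ /norP [aU1 _] /andP [aU2 _]].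
rewrite !big_cat !big_cons /= ffunE eqxx.
have same_on V : a \notin V ->
    \prod_(i <- V | [ffun i => p i (+) (i == a)] i) e i = \prod_(i <- V | p i) e i.
  move=> aV; rewrite -big_filter -[RHS]big_filter (@eq_in_filter _ _ p) // => i iV.
  by rewrite ffunE; case: eqP iV aV => [-> -> | _ _ _]; rewrite ?addbF.
rewrite !same_on // mulgA.
apply: sign_eq_trans (sign_eqMr _ (sign_eq_mulC (e a) _)) _.
rewrite -!mulgA; apply: sign_eqMl.
case: (p a) => /=; last exact: sign_eq_refl.
by rewrite mulgA -[X in _ =± X]mul1g; apply/sign_eqMr/sign_eq_sqr.
Qed.

Lemma sign_eq_emon_ext x (p q : {ffun 'I_n -> bool}) :
  x =± emon e p -> p =1 q -> x =± emon e q.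
Proof. by move=> xp /ffunP <-. Qed.

Lemma prod_mul_emon (I : Type) (s : seq I) (P : pred I) (F : I -> G)
    (v : I -> 'I_n -> bool) q :
  (forall i q, F i * emon e q =± emon e [ffun j => q j (+) v i j]) ->
  (\prod_(i <- s | P i) F i) * emon e q
    =± emon e [ffun j => q j (+) odd (count (fun i => P i && v i j) s)].
Proof.
move=> Fv; elim: s q => [|a s IHs] q.
  rewrite big_nil mul1g; apply: sign_eq_emon_ext (sign_eq_refl _) _ => j.
  by rewrite ffunE addbF.
rewrite big_cons; case Pa: (P a).
  rewrite -mulgA; apply: sign_eq_trans (sign_eqMl _ (IHs q)) _.
  apply: sign_eq_emon_ext (Fv _ _) _ => j.
  by rewrite !ffunE /= Pa /= oddD oddb -addbA [_ (+) v a j]addbC.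
apply: sign_eq_emon_ext (IHs q) _ => j.
by rewrite !ffunE /= Pa.
Qed.

Lemma emonM p q : emon e p * emon e q =± emon e [ffun j => p j (+) q j].
Proof.
rewrite {1}emonE.
apply: sign_eq_emon_ext (prod_mul_emon _ _ (v := fun i j => j == i) _ _) _ => [i r|j].
  exact: mul_emon_flip.
by rewrite !ffunE (count_and_eq p) oddb addbC.
Qed.

Hypothesis anti : anticommutative m e.

Lemma mul_prod_anti a s :
  e a * \prod_(i <- s) e i = m ^+ count (predC1 a) s * (\prod_(i <- s) e i * e a).
Proof.
elim: s => [|b s IHs]; first by rewrite !big_nil expg0 mulg1 !mul1g.
rewrite !big_cons /=; case: (eqVneq b a) => [-> | ba].
  by rewrite add0n [in LHS]IHs !mulgA (commute_expm _ (e a)).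
have ab : e a * e b = m * (e b * e a) by apply: anti; rewrite eq_sym.
rewrite mulgA ab -!mulgA IHs add1n expgS -mulgA; congr (m * _).
by rewrite !mulgA (commute_expm _ (e b)).
Qed.

Variable t : nat.
Hypothesis sqr_e : forall i, e i * e i = m ^+ t.

Lemma sqr_prod_uniq s : uniq s ->
  (\prod_(i <- s) e i) * (\prod_(i <- s) e i) = m ^+ ('C(size s, 2) + t * size s).
Proof.
elim: s => [|a s IHs] /=; first by rewrite big_nil mulg1 muln0.
case/andP=> as_ us; rewrite big_cons; set P := \prod_(i <- s) e i.
have count_s : count (predC1 a) s = size s.
  apply/eqP; rewrite -all_count; apply/allP => b bs /=.
  by apply: contraNneq as_ => <-.
have swap : P * e a = m ^+ size s * (e a * P).
  by rewrite mul_prod_anti count_s mulgA expm_double mul1g.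
rewrite -mulgA [P * _]mulgA swap !mulgA -(commute_expm _ (e a)) -(mulgA (m ^+ _)) sqr_e.
rewrite -!mulgA IHs // -!expgnDr binS bin1 mulnS; congr (m ^+ _).
by rewrite !addnA [_ + 'C(_, _)]addnC !addnA.
Qed.

Lemma emon_sqr p : emon e p * emon e p = m ^+ ('C(count p U, 2) + t * count p U).
Proof.
by rewrite emonE -big_filter sqr_prod_uniq ?size_filter ?filter_uniq ?index_enum_uniq.
Qed.

Lemma num_negE : num_neg m e = binom_sum (negative_weight t) n.
Proof.
by rewrite -card_count_ffun; apply: eq_card => p; rewrite !inE /gmul emon_sqr expm_eqm.
Qed.

Hypothesis n_even : ~~ odd n.

Lemma emon_full : emon e [ffun=> true] = \prod_(i <- U) e i.
Proof. by rewrite emonE; apply: eq_bigl => i; rewrite ffunE. Qed.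

Lemma mul_emon_full_anti i : e i * emon e [ffun=> true] = m * (emon e [ffun=> true] * e i).
Proof.
have count_i : (count (predC1 i) U).+1 = size U.
  by rewrite -(count_predC (pred1 i)) count_uniq_mem ?index_enum_uniq ?mem_index_enum.
rewrite emon_full mul_prod_anti expm_odd -[odd _]negbK -oddS count_i.
by rewrite size_index_enum_ord n_even.
Qed.

Definition twist i := emon e [ffun=> true] * e i.

Definition twist_exp (p : {ffun 'I_n -> bool}) := [ffun j => odd (count p U) (+) p j].

Lemma mul_twist_emon i q : twist i * emon e q =± emon e [ffun j => q j (+) (j != i)].
Proof.
rewrite /twist -mulgA; apply: sign_eq_trans (sign_eqMl _ (mul_emon_flip i q)) _.
by apply: sign_eq_emon_ext (emonM _ _) _ => j; rewrite !ffunE addTb -addbN.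
Qed.

Lemma emon_twist p : emon twist p =± emon e (twist_exp p).
Proof.
rewrite -[emon twist p]mulg1 -emon0 emonE.
apply: sign_eq_emon_ext (prod_mul_emon _ _ (v := fun i j => j != i) _ mul_twist_emon) _ => j.
by rewrite !ffunE (countD1 p j) oddD oddb [p j (+) _]addbC addbK.
Qed.

Lemma odd_count_twist_exp p : odd (count (twist_exp p) U) = odd (count p U).
Proof.
have odd_compl : odd (count (predC p) U) = odd (count p U).
  have := count_predC p U; rewrite size_index_enum_ord => /(congr1 odd).
  by rewrite oddD (negbTE n_even); case: (odd _); case: (odd _).
have -> : count (twist_exp p) U = if odd (count p U) then count (predC p) U else count p U.
  by case: ifP => odd_p; apply: eq_count => j; rewrite ffunE odd_p.
by case: ifP => // odd_p; rewrite odd_compl.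
Qed.

Lemma twist_expK : involutive twist_exp.
Proof. by move=> p; apply/ffunP => j; rewrite !ffunE odd_count_twist_exp addKb. Qed.

Lemma twist_exp0 : twist_exp [ffun=> false] = [ffun=> false].
Proof.
apply/ffunP => j; rewrite !ffunE (@eq_count _ _ pred0) ?count_pred0 // => i.
by rewrite ffunE.
Qed.

Hypothesis n4 : 4 %| n.

Lemma sqr_emon_full : emon e [ffun=> true] * emon e [ffun=> true] = 1.
Proof.
rewrite emon_full sqr_prod_uniq ?index_enum_uniq // size_index_enum_ord expm_odd.
by rewrite oddD oddM (negbTE (bin2_even_of_dvd4 n4)) (negbTE n_even) andbF.
Qed.

Lemma twistM i j : twist i * twist j = m * (e i * e j).
Proof.
rewrite /twist; set E := emon e _.
rewrite -mulgA (mulgA (e i)) mul_emon_full_anti !mulgA -(commute_m E) -(mulgA m E).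
by rewrite sqr_emon_full mulg1.
Qed.

Lemma anticommutative_twist : anticommutative m twist.
Proof. by move=> i j ij; rewrite /gmul !twistM; congr (m * _); apply: anti. Qed.

Lemma twist_sqr i : twist i * twist i = m ^+ t.+1.
Proof. by rewrite twistM sqr_e -expgS. Qed.

Lemma basic_twist : basic m e -> basic m twist.
Proof.
move=> basic_e p p0; have [|ne1 nem] := basic_e (twist_exp p).
  by rewrite -twist_exp0 (inj_eq (can_inj twist_expK)).
exact: sign_eq_neq1m (emon_twist p) ne1 nem.
Qed.

Lemma same_generated_twist : same_generated m e twist.
Proof.
move=> x; rewrite !generatedP; split=> [[q xq] | [p xp]].
  exists (twist_exp q); apply: sign_eq_trans xq _; rewrite -{1}(twist_expK q).
  exact/sign_eq_sym/emon_twist.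
by exists (twist_exp p); apply: sign_eq_trans xp (emon_twist p).
Qed.

Lemma twist_replacement : basic m e ->
  [/\ basic m twist, anticommutative m twist, forall i, twist i * twist i = m ^+ t.+1
     & same_generated m e twist].
Proof.
by split; [exact: basic_twist | exact: anticommutative_twist | exact: twist_sqr
          | exact: same_generated_twist].
Qed.

End SignedGroupTheory.

Section PowersOfOnePlusI.
Local Open Scope R_scope.

(* (1 + i)^n / 2 = re_pow1i n + i im_pow1i n, as 1 + i = sqrt 2 exp (i PI / 4). *)
Definition re_pow1i n := Rpower 2 (INR n / 2 - 1) * cos (INR n * PI / 4).
Definition im_pow1i n := Rpower 2 (INR n / 2 - 1) * sin (INR n * PI / 4).

Lemma Rpower_gt0 x y : 0 < Rpower x y.
Proof. exact: exp_pos. Qed.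

Lemma Rpower2_S n : Rpower 2 (INR n.+1 / 2 - 1) = Rpower 2 (INR n / 2 - 1) * sqrt 2.
Proof.
rewrite -Rpower_sqrt; last lra.
by rewrite -Rpower_plus S_INR; f_equal; field.
Qed.

Lemma re_pow1iS n : re_pow1i n.+1 = re_pow1i n - im_pow1i n.
Proof.
rewrite /re_pow1i /im_pow1i Rpower2_S S_INR.
have -> : (INR n + 1) * PI / 4 = INR n * PI / 4 + PI / 4 by field.
rewrite cos_plus cos_PI4 sin_PI4; field; apply: sqrt2_neq_0.
Qed.

Lemma im_pow1iS n : im_pow1i n.+1 = re_pow1i n + im_pow1i n.
Proof.
rewrite /re_pow1i /im_pow1i Rpower2_S S_INR.
have -> : (INR n + 1) * PI / 4 = INR n * PI / 4 + PI / 4 by field.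
rewrite sin_plus cos_PI4 sin_PI4; field; apply: sqrt2_neq_0.
Qed.

Lemma re_pow1i0 : re_pow1i 0 = 1 / 2.
Proof.
rewrite /re_pow1i INR_0 Rmult_0_l /Rdiv !Rmult_0_l Rminus_0_l cos_0 Rmult_1_r.
by rewrite Rpower_Ropp Rpower_1; lra.
Qed.

Lemma im_pow1i0 : im_pow1i 0 = 0.
Proof. by rewrite /im_pow1i INR_0 /Rdiv !Rmult_0_l sin_0 Rmult_0_r. Qed.

Lemma im_pow1i_eq0 n : im_pow1i n = 0 <-> (4 %| n)%N.
Proof.
split=> [|/dvdnP [q ->]].
  case/Rmult_integral => [|/sin_eq_0_0 [k nk]].
    by have := Rpower_gt0 2 (INR n / 2 - 1); lra.
  have /eq_IZR n4k : IZR (Z.of_nat n) = IZR (4 * k).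
    rewrite -INR_IZR_INZ mult_IZR; apply: (Rmult_eq_reg_r PI); last exact: PI_neq0.
    lra.
  by apply/dvdnP; exists (Z.to_nat k); lia.
rewrite /im_pow1i (_ : INR (q * 4) * PI / 4 = IZR (Z.of_nat q) * PI).
  by rewrite sin_eq_0_1 ?Rmult_0_r //; exists (Z.of_nat q).
by rewrite -INR_IZR_INZ -multE mult_INR /=; field.
Qed.

Lemma INR_expn2 k : INR (expn 2 k) = 2 ^ k.
Proof. by elim: k => [|k IHk] //; rewrite expnS mulnE mult_INR IHk /=; ring. Qed.

Lemma binom_sum_negative_weightE n :
  INR (binom_sum (negative_weight 0) n) = 2 ^ n / 2 - (re_pow1i n + im_pow1i n) /\
  INR (binom_sum (negative_weight 1) n) = 2 ^ n / 2 - (re_pow1i n - im_pow1i n).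
Proof.
elim: n => [|n [IH0 IH1]].
  by rewrite /binom_sum !big_ord1 re_pow1i0 im_pow1i0 /=; split; lra.
have := congr1 INR (binom_sum_negative_weight0S n).
have := congr1 INR (binom_sum_negative_weight1S n).
by rewrite !addnE !plus_INR INR_expn2 re_pow1iS im_pow1iS /=; split; lra.
Qed.

End PowersOfOnePlusI.

Theorem proposition4p1 (n : nat) (hn : (1 <= n)%N) :
  (* (1) first half: s_- = s_+  <->  4 | n *)
  (forall (G1 : groupType) (m1 : G1) (e : 'I_n -> G1)
          (G2 : groupType) (m2 : G2) (f : 'I_n -> G2),
     signed_group m1 -> positive_seq e -> anticommutative m1 e -> basic m1 e ->
     signed_group m2 -> negative_seq m2 f -> anticommutative m2 f -> basic m2 f ->
     (num_neg m2 f = num_neg m1 e <-> (4 %| n)%N))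
  /\
  (* (1) second half: replacement by a pure anticommutative generator of the
     opposite signature *)
  ((4 %| n)%N ->
   forall (G : groupType) (m : G) (e : 'I_n -> G),
     signed_group m -> anticommutative m e -> basic m e ->
     (positive_seq e ->
        exists (k : nat) (f : 'I_k -> G),
          basic m f /\ anticommutative m f /\ negative_seq m f /\
          same_generated m e f)
     /\
     (negative_seq m e ->
        exists (k : nat) (f : 'I_k -> G),
          basic m f /\ anticommutative m f /\ positive_seq f /\
          same_generated m e f))
  /\
  (* (2) value of s_+ *)
  (forall (G : groupType) (m : G) (e : 'I_n -> G),
     signed_group m -> positive_seq e -> anticommutative m e -> basic m e ->
     INR (num_neg m e) =
       (2 ^ (n - 1) - Rpower 2 (INR n / 2 - 1) *
          (cos (INR n * PI / 4) + sin (INR n * PI / 4)))%R)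
  /\
  (* (2) value of s_- *)
  (forall (G : groupType) (m : G) (e : 'I_n -> G),
     signed_group m -> negative_seq m e -> anticommutative m e -> basic m e ->
     INR (num_neg m e) =
       (2 ^ (n - 1) - Rpower 2 (INR n / 2 - 1) *
          (cos (INR n * PI / 4) - sin (INR n * PI / 4)))%R).
Proof.
have pow2n : (2 ^ (n - 1) = 2 ^ n / 2)%R by case: n hn => // k _; rewrite subn1 /=; field.
have [s_pos s_neg] := binom_sum_negative_weightE n.
split; [|split; [|split]].
- move=> G1 m1 e G2 m2 f sg1 pe an1 _ sg2 nf an2 _.
  rewrite (num_negE (t := 0) sg1 an1 pe) (num_negE (t := 1) sg2 an2 nf) -im_pow1i_eq0.
  split=> [/(congr1 INR) | im0]; first by rewrite s_pos s_neg; lra.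
  by apply: INR_eq; rewrite s_pos s_neg im0; lra.
- move=> n4 G m e sg an basic_e.
  have n_even : ~~ odd n by rewrite -dvdn2 (dvdn_trans _ n4).
  split=> [pe | ne].
    have [] := twist_replacement (t := 0) sg an pe n_even n4 basic_e.
    by exists n, (twist e).
  have [basic_f anti_f sqr_f gen_f] := twist_replacement (t := 1) sg an ne n_even n4 basic_e.
  exists n, (twist e); split=> //; split=> //; split=> // i.
  by rewrite /positive_elt /gmul sqr_f expg2 (mulmm sg).
- move=> G m e sg pe an _.
  by rewrite (num_negE (t := 0) sg an pe) s_pos pow2n /re_pow1i /im_pow1i; ring.
move=> G m e sg ne an _.
by rewrite (num_negE (t := 1) sg an ne) s_neg pow2n /re_pow1i /im_pow1i; ring.
Qed.
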